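(* Let $i\in\{1,\dots,N\}$, $\mathbb I\subset\{i-2K,\dots,i+2K\}$ and $k,l\notin\mathbb I$. Then $|G^{(\mathbb I)}_{kl}|\le 8K^2\Gamma^2\gamma$.
   Context: $K\ge1$ is an integer. $H$ is an $N\times N$ real symmetric matrix, $z\in\mathbb C^+$, $G=(H-z)^{-1}$. For $\mathbb T\subset\{1,\dots,N\}$, $H^{(\mathbb T)}$ has entries $H_{ij}\mathbf 1_{i\notin\mathbb T}\mathbf 1_{j\notin\mathbb T}$ and $G^{(\mathbb T)}=(H^{(\mathbb T)}-z)^{-1}$; $A_{\mathbb S,\mathbb U}$ denotes a submatrix. Control parameters: $\Gamma=1\vee\max_{i,j}|G_{ij}|$ and $\gamma=1\vee\sup_i\sup_{\mathbb I,\mathbb J}\|(G^{(\mathbb J)}_{\mathbb I,\mathbb I})^{-1}\|$, where the inner supremum is over all disjoint $\mathbb I,\mathbb J\subset\{i-2K,\dots,i+2K\}$ and $\|\cdot\|$ is the operator norm. *)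

(* Complex scalars: an arbitrary numClosedFieldType C
   (e.g. the complex numbers); "real" entries are those with x \is Num.real. *)
From HB Require Import structures.
From mathcomp Require Import all_boot all_order all_algebra.
Set Implicit Arguments. Unset Strict Implicit. Unset Printing Implicit Defensive.
Import Order.TTheory GRing.Theory Num.Theory.
Local Open Scope ring_scope.

Definition minor_mat (C : numClosedFieldType) (N : nat) (T : {set 'I_N})
  (H : 'M[C]_N) : 'M[C]_N :=
  \matrix_(i, j) (if (i \notin T) && (j \notin T) then H i j else 0).

Definition resolvent (C : numClosedFieldType) (N : nat) (H : 'M[C]_N) (z : C)
  : 'M[C]_N := invmx (H - z%:M).

(* A_{S,S}: the principal submatrix indexed by S (in increasing order) *)
Definition subm (C : numClosedFieldType) (N : nat) (A : 'M[C]_N)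
  (S : {set 'I_N}) : 'M[C]_#|S| :=
  \matrix_(a, b) A (enum_val a) (enum_val b).

Definition window (N K : nat) (i : 'I_N) : {set 'I_N} :=
  [set j : 'I_N | (i <= j + 2 * K)%N && (j <= i + 2 * K)%N].

Definition vnorm2 (C : numClosedFieldType) (n : nat) (v : 'cV[C]_n) : C :=
  \sum_j `|v j 0| ^+ 2.

(* ||A|| <= g  (operator norm w.r.t. Euclidean norm), for g >= 0 *)
Definition opnorm_le (C : numClosedFieldType) (n : nat) (A : 'M[C]_n) (g : C)
  : Prop := forall v : 'cV[C]_n, vnorm2 (A *m v) <= g ^+ 2 * vnorm2 v.

Definition Gamma (C : numClosedFieldType) (N : nat) (G : 'M[C]_N) : C :=
  \big[Num.max/1]_(p : 'I_N * 'I_N) `|G p.1 p.2|.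

From HB Require Import structures.
From mathcomp Require Import all_boot all_order all_algebra.
From mathcomp Require Import ring zify.
Set Implicit Arguments. Unset Strict Implicit. Unset Printing Implicit Defensive.
Import Order.TTheory GRing.Theory Num.Theory.
Local Open Scope ring_scope.

(* Schur complement: with P the selection of the rows in I,
   G^(I) = G - G P^T (P G P^T)^-1 P G on every column l outside I.  The
   second term is the bilinear form of ||(G_II)^-1|| <= g against two vectors
   of at most #|I| <= 4K + 1 entries bounded by Gamma, so by Cauchy-Schwarz
   it is at most #|I| g Gamma^2, and
   Gamma + (4K + 1) g Gamma^2 <= 8 K^2 g Gamma^2. *)

Section Selection.
Variables (C : numClosedFieldType) (N : nat) (I : {set 'I_N}).

Definition sel_mx : 'M[C]_(#|I|, N) := \matrix_(p, j) (enum_val p == j)%:R.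

Definition cosel_mx : 'M[C]_N := 1%:M - sel_mx^T *m sel_mx.

Lemma mulmx_sel_trE m (A : 'M[C]_(m, N)) k p :
  (A *m sel_mx^T) k p = A k (enum_val p).
Proof.
rewrite mxE (bigD1 (enum_val p)) //= big1 ?addr0.
  by rewrite !mxE eqxx mulr1.
by move=> j /negPf hj; rewrite !mxE eq_sym hj mulr0.
Qed.

Lemma sel_mulmxE m (A : 'M[C]_(N, m)) p l :
  (sel_mx *m A) p l = A (enum_val p) l.
Proof.
rewrite mxE (bigD1 (enum_val p)) //= big1 ?addr0.
  by rewrite !mxE eqxx mul1r.
by move=> j /negPf hj; rewrite !mxE eq_sym hj mul0r.
Qed.

Lemma sel_mulmx_tr : sel_mx *m sel_mx^T = 1%:M.
Proof.
by apply/matrixP => p q; rewrite mulmx_sel_trE !mxE (inj_eq enum_val_inj).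
Qed.

Lemma sel_tr_mulmx_selE m (A : 'M[C]_(N, m)) j c :
  (sel_mx^T *m (sel_mx *m A)) j c = (j \in I)%:R * A j c.
Proof.
rewrite mxE; under eq_bigr => p _ do rewrite sel_mulmxE !mxE.
have [jI | jNI] := boolP (j \in I).
  rewrite (bigD1 (enum_rank_in jI j)) //= big1 ?addr0.
    by rewrite enum_rankK_in // eqxx.
  move=> p pNj; case: eqP => [pj | _]; last by rewrite mul0r.
  by move: pNj; rewrite -{2}pj enum_valK_in eqxx.
rewrite big1 ?mul0r // => p _; case: eqP => [pj | _]; last by rewrite mul0r.
by move: jNI; rewrite -pj enum_valP.
Qed.

Lemma cosel_mulmxE m (A : 'M[C]_(N, m)) j c :
  (cosel_mx *m A) j c = (j \notin I)%:R * A j c.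
Proof.
rewrite mulmxBl mul1mx -mulmxA [LHS]mxE [X in _ + X]mxE sel_tr_mulmx_selE.
by case: (j \in I); rewrite ?mul1r ?mul0r ?subrr ?subr0.
Qed.

Lemma mulmx_coselE m (A : 'M[C]_(m, N)) j c :
  (A *m cosel_mx) j c = (c \notin I)%:R * A j c.
Proof.
have coselT : cosel_mx^T = cosel_mx.
  by rewrite /cosel_mx linearB /= trmx1 trmx_mul trmxK.
by rewrite -[A *m _]trmxK trmx_mul coselT [LHS]mxE cosel_mulmxE mxE.
Qed.

Lemma subm_sel (G : 'M[C]_N) : subm G I = sel_mx *m G *m sel_mx^T.
Proof. by apply/matrixP => p q; rewrite mulmx_sel_trE sel_mulmxE mxE. Qed.

Lemma minor_mat_cosel (H : 'M[C]_N) :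
  minor_mat I H = cosel_mx *m H *m cosel_mx.
Proof.
apply/matrixP => j c; rewrite mulmx_coselE cosel_mulmxE !mxE.
by case: (j \in I); case: (c \in I); rewrite ?mul0r ?mul1r.
Qed.

End Selection.

Lemma minor_mat_set0 (C : numClosedFieldType) N (H : 'M[C]_N) :
  minor_mat set0 H = H.
Proof. by apply/matrixP => a b; rewrite !mxE !in_set0. Qed.

Lemma minor_mat_real (C : numClosedFieldType) N (J : {set 'I_N}) (S : 'M[C]_N) :
  (forall i j, S i j \is Num.real) ->
  forall i j, minor_mat J S i j \is Num.real.
Proof. by move=> Sr i j; rewrite mxE; case: ifP. Qed.

Lemma tr_minor_mat (C : numClosedFieldType) N (J : {set 'I_N}) (S : 'M[C]_N) :
  (minor_mat J S)^T = minor_mat J S^T.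
Proof. by apply/matrixP => i j; rewrite !mxE andbC. Qed.

Lemma real_sym_sub_scalar_unitmx (C : numClosedFieldType) N (S : 'M[C]_N) z :
  (forall i j, S i j \is Num.real) -> S^T = S ->
  0 < 'Im z -> S - z%:M \in unitmx.
Proof.
move=> Sr /matrixP STS Hz.
have Ss i j : S i j = S j i by rewrite -[in LHS]STS mxE.
rewrite unitmxE unitfE; apply/negP => /det0P [v vn0 hv].
have vS : v *m S = z *: v.
  by apply/eqP; rewrite -subr_eq0 -mul_mx_scalar -mulmxBr hv.
pose t := \sum_j `|v 0 j| ^+ 2.
pose s := \sum_j (v *m S) 0 j * (v 0 j)^*.
have st : s = z * t.
  rewrite /s /t vS mulr_sumr; apply: eq_bigr => j _.
  by rewrite mxE normCK mulrA.
(* s = v S v^* is a Hermitian form, hence real *)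
have s_real : s \is Num.real.
  apply/CrealP; rewrite /s rmorph_sum /=.
  under eq_bigr => j _ do rewrite mxE rmorphM /= conjCK rmorph_sum mulr_suml.
  rewrite exchange_big /=; apply: eq_bigr => a _.
  rewrite mxE mulr_suml; apply: eq_bigr => j _.
  rewrite rmorphM /= (conj_Creal (Sr _ _)) (Ss j a); ring.
have t_neq0 : t != 0.
  apply/negP => /eqP /psumr_eq0P t0.
  apply/negP: vn0; rewrite negbK; apply/eqP/matrixP => i j.
  rewrite (ord1 i) mxE; apply/eqP; rewrite -normr_eq0 -sqrf_eq0; apply/eqP.
  by apply: t0 => // k _; rewrite exprn_ge0.
have t_real : t \is Num.real.
  by apply: sum_real => j _; rewrite ger0_real ?exprn_ge0.
have z_real : z \is Num.real by rewrite -[z](mulfK t_neq0) -st rpredM ?rpredV.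
by move/Creal_ImP: z_real Hz => ->; rewrite ltxx.
Qed.

Section SchurComplement.
Variables (C : numClosedFieldType) (N : nat) (H : 'M[C]_N) (z : C).
Variable I : {set 'I_N}.
Hypotheses (HzU : H - z%:M \in unitmx) (HIzU : minor_mat I H - z%:M \in unitmx).
Local Notation G := (resolvent H z).
Local Notation P := (sel_mx C I).
Hypothesis GIU : subm G I \in unitmx.
Local Notation Ai := (invmx (subm G I)).

Lemma resolvent_minor_cosel :
  resolvent (minor_mat I H) z *m cosel_mx C I = G - G *m P^T *m Ai *m P *m G.
Proof.
set Q := cosel_mx C I; set At := P^T *m Ai *m P; set Y := G - _.
have YE : Y = G - G *m At *m G by rewrite /Y /At !mulmxA.
have MG : (H - z%:M) *m G = 1%:M by rewrite mulmxV.
have PtPGAt : P^T *m P *m G *m At = P^T *m P.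
  have -> : P^T *m P *m G *m At = P^T *m (P *m G *m P^T *m Ai) *m P.
    by rewrite /At !mulmxA.
  by rewrite -subm_sel mulmxV // mulmx1.
have QY : Q *m Y = Y.
  rewrite /Q mulmxBl mul1mx YE [X in _ - X]mulmxBr.
  by rewrite !(mulmxA (P^T *m P)) PtPGAt subrr subr0.
have QAt : Q *m At = 0.
  rewrite /Q /At mulmxBl mul1mx !mulmxA -(mulmxA _ P P^T) sel_mulmx_tr.
  by rewrite mulmx1 subrr.
have MY : (H - z%:M) *m Y = 1%:M - At *m G.
  by rewrite YE mulmxBr MG !mulmxA MG mul1mx.
have MIY : (minor_mat I H - z%:M) *m Y = Q.
  rewrite minor_mat_cosel -/Q mulmxBl -(mulmxA (Q *m H)) QY -mulmxA.
  rewrite -[in X in _ - X]QY (mulmxA z%:M) -scalar_mxC -(mulmxA Q).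
  rewrite -mulmxBr -mulmxBl MY.
  by rewrite mulmxBr mulmx1 mulmxA QAt mul0mx subr0.
by rewrite -MIY mulmxA mulVmx // mul1mx.
Qed.

Lemma resolvent_minorE k l : l \notin I ->
  resolvent (minor_mat I H) z k l =
  G k l - (row k (G *m P^T) *m Ai *m col l (P *m G)) 0 0.
Proof.
move=> lNI.
have -> : (row k (G *m P^T) *m Ai *m col l (P *m G)) 0 0
    = (G *m P^T *m Ai *m P *m G) k l.
  rewrite -row_mul -mulmxA -(mulmxA _ P) [RHS]mxE mxE.
  by apply: eq_bigr => p _; rewrite !mxE.
have -> : resolvent (minor_mat I H) z k l
    = (resolvent (minor_mat I H) z *m cosel_mx C I) k l.
  by rewrite mulmx_coselE lNI mul1r.
by rewrite resolvent_minor_cosel [LHS]mxE [X in _ + X]mxE.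
Qed.

End SchurComplement.

Lemma sqr_sum_le (C : numClosedFieldType) n (a : 'I_n -> C) :
  (forall p, a p \is Num.real) ->
  (\sum_p a p) ^+ 2 <= n%:R * \sum_p a p ^+ 2.
Proof.
move=> a_real.
(* the difference is half the sum of all the squares (a p - a q)^2 *)
have sum_sqr_diff : \sum_p \sum_q (a p - a q) ^+ 2 =
    2%:R * (n%:R * \sum_p a p ^+ 2 - (\sum_p a p) ^+ 2).
  have sqrB p q : (a p - a q) ^+ 2 = a p ^+ 2 + a q ^+ 2 - 2%:R * (a p * a q).
    by ring.
  under eq_bigr => p _ do under eq_bigr => q _ do rewrite sqrB.
  rewrite expr2 big_distrlr /=.
  under eq_bigr => p _
    do rewrite !big_split /= sumr_const card_ord sumrN -mulr_sumr.
  rewrite !big_split /= sumr_const card_ord sumrN -mulr_sumr sumrMnl.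
  by rewrite -mulr_natl; ring.
have : 0 <= \sum_p \sum_q (a p - a q) ^+ 2.
  by apply: sumr_ge0 => p _; apply: sumr_ge0 => q _; rewrite -realEsqr rpredB.
by rewrite sum_sqr_diff pmulr_rge0 // subr_ge0.
Qed.

Lemma norm_bilinear_le (C : numClosedFieldType) n (A : 'M[C]_n) (g a b : C)
    (u : 'rV[C]_n) (v : 'cV[C]_n) :
  0 <= g -> 0 <= a -> 0 <= b -> opnorm_le A g ->
  (forall p, `|u 0 p| <= a) -> (forall p, `|v p 0| <= b) ->
  `|(u *m A *m v) 0 0| <= n%:R * g * a * b.
Proof.
move=> g0 a0 b0 Ag ua vb; rewrite -mulmxA; set x := A *m v.
have vn : vnorm2 v <= n%:R * b ^+ 2.
  rewrite mulr_natl -[X in _ *+ X](card_ord n) -sumr_const.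
  by apply: ler_sum => p _; rewrite !expr2 ler_pM.
have xn : vnorm2 x <= g ^+ 2 * (n%:R * b ^+ 2).
  by apply: le_trans (Ag v) _; rewrite ler_wpM2l ?exprn_ge0.
have sum_x : \sum_p `|x p 0| <= n%:R * g * b.
  have sum_x0 : 0 <= \sum_p `|x p 0| by rewrite sumr_ge0.
  have ngb0 : 0 <= n%:R * g * b by rewrite !mulr_ge0.
  rewrite -ler_sqr ?nnegE //.
  apply: le_trans (sqr_sum_le (fun p => normr_real (x p 0))) _.
  apply: le_trans (ler_wpM2l (ler0n _ n) xn) _.
  by rewrite le_eqVlt; apply/orP; left; apply/eqP; ring.
rewrite mxE; apply: le_trans (ler_norm_sum _ _ _) _.
apply: le_trans (_ : _ <= \sum_p a * `|x p 0|) _.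
  by apply: ler_sum => p _; rewrite normrM ler_wpM2r.
by rewrite -mulr_sumr mulrC mulrAC ler_wpM2r.
Qed.

Lemma bigmax1_ge (C : numClosedFieldType) (T : eqType) (r : seq T)
    (F : T -> C) :
  (forall x, 0 <= F x) ->
  1 <= \big[Num.max/1]_(x <- r) F x /\
  forall x, x \in r -> F x <= \big[Num.max/1]_(x <- r) F x.
Proof.
move=> F0; elim: r => [|y r [ge1 geF]]; first by rewrite big_nil lexx.
(* Num.max is only monotone on comparable arguments; all values here are real *)
have cmp : F y >=< \big[Num.max/1]_(x <- r) F x.
  by rewrite real_comparable ?ger0_real // (le_trans _ ge1).
rewrite big_cons; split; first by rewrite comparable_le_max // ge1 orbT.
move=> x; rewrite inE => /orP [/eqP -> | xr].
  by rewrite comparable_le_max // lexx.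
by rewrite comparable_le_max // geF // orbT.
Qed.

Lemma Gamma_ge1 (C : numClosedFieldType) N (G : 'M[C]_N) : 1 <= Gamma G.
Proof.
by case: (bigmax1_ge (index_enum _) (fun p => normr_ge0 (G p.1 p.2))).
Qed.

Lemma norm_le_Gamma (C : numClosedFieldType) N (G : 'M[C]_N) a b :
  `|G a b| <= Gamma G.
Proof.
have [_ geF] := bigmax1_ge (index_enum _) (fun p => normr_ge0 (G p.1 p.2)).
exact: (geF (a, b) (mem_index_enum _)).
Qed.

Lemma card_window N K (i : 'I_N) : (#|window K i| <= 4 * K + 1)%N.
Proof.
pose f (j : 'I_N) : 'I_(4 * K).+1 := inord (j + 2 * K - i).
have f_inj : {in window K i &, injective f}.
  move=> a b; rewrite !inE => /andP [a1 a2] /andP [b1 b2].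
  move/(congr1 (@nat_of_ord _)).
  by rewrite /f !inordK; try lia; move=> fab; apply: val_inj => /=; lia.
by rewrite -(card_in_imset f_inj) (leq_trans (max_card _)) // card_ord; lia.
Qed.

Theorem corollary3p2 (C : numClosedFieldType) (N K : nat) (H : 'M[C]_N)
  (z : C) (g : C)
  (HK : (1 <= K)%N)
  (Hreal : forall i j, H i j \is Num.real)
  (Hsym : H^T = H)
  (Hz : 0 < 'Im z)
  (Hg1 : 1 <= g)
  (Hg : forall (i : 'I_N) (I J : {set 'I_N}),
      I \subset window K i -> J \subset window K i -> [disjoint I & J] ->
      subm (resolvent (minor_mat J H) z) I \in unitmx /\
      opnorm_le (invmx (subm (resolvent (minor_mat J H) z) I)) g)
  (i : 'I_N) (I : {set 'I_N}) (k l : 'I_N)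
  (HI : I \subset window K i) (Hk : k \notin I) (Hl : l \notin I) :
  `|resolvent (minor_mat I H) z k l|
    <= 8%:R * (K ^ 2)%:R * Gamma (resolvent H z) ^+ 2 * g.
Proof.
set G := resolvent H z; set Ga := Gamma G.
have HzU := real_sym_sub_scalar_unitmx Hreal Hsym Hz.
have HIzU : minor_mat I H - z%:M \in unitmx.
  apply: real_sym_sub_scalar_unitmx Hz; first exact: minor_mat_real.
  by rewrite tr_minor_mat Hsym.
have [GIU GIg] : subm G I \in unitmx /\ opnorm_le (invmx (subm G I)) g.
  rewrite /G -[H]minor_mat_set0; apply: (Hg i) => //; first exact: sub0set.
  by rewrite -setI_eq0 setI0.
have Ga1 : 1 <= Ga := Gamma_ge1 G.
have [Ga0 g0] : 0 <= Ga /\ 0 <= g by split; apply: le_trans ler01 _.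
have cardI : (#|I|%:R : C) <= (4 * K + 1)%:R.
  by rewrite ler_nat (leq_trans (subset_leq_card HI)) ?card_window.
rewrite resolvent_minorE //; apply: le_trans (ler_normB _ _) _.
apply: le_trans (lerD (norm_le_Gamma G k l)
  (norm_bilinear_le g0 Ga0 Ga0 GIg _ _)) _.
- by move=> p; rewrite mxE mulmx_sel_trE norm_le_Gamma.
- by move=> p; rewrite mxE sel_mulmxE norm_le_Gamma.
set t := g * Ga ^+ 2.
have Ga_le_t : Ga <= t by rewrite /t expr2 mulrA ler_peMl // mulr_ege1.
have -> : #|I|%:R * g * Ga * Ga = #|I|%:R * t by rewrite /t; ring.
have -> : 8%:R * (K ^ 2)%:R * Ga ^+ 2 * g = (8 * K ^ 2)%:R * t.
  by rewrite /t natrM; ring.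
have t0 : 0 <= t by rewrite mulr_ge0 ?exprn_ge0.
apply: le_trans (lerD Ga_le_t (ler_wpM2r t0 cardI)) _.
rewrite -[X in X + _]mul1r -mulrDl -(natrD C 1) ler_wpM2r //.
by rewrite ler_nat; clear -HK; nia.
Qed.
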